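(* Let $R$ be an associative ring with identity and let $e_1, e_2$ be idempotents of $R$ with $e_1 \sim_o e_2$. Then there is an inner automorphism of $R$ (a map $x \mapsto wxw^{-1}$ for some unit $w \in R$) sending $e_1$ to $e_2$.
   Context: Let $\gamma(R)$ be the directed graph whose vertices are the idempotents of $R$, with an edge $f \to g$ if and only if $fg = 0$; $g$ is then called an out-neighbour of $f$. For idempotents $e, e'$, write $e \sim_o e'$ if they have the same set of out-neighbours in $\gamma(R)$, i.e. for every idempotent $f \in R$, $ef = 0 \iff e'f = 0$. *)

From mathcomp Require Import all_boot all_algebra.
Set Implicit Arguments. Unset Strict Implicit. Unset Printing Implicit Defensive.
Import GRing.Theory.
Local Open Scope ring_scope.

Definition is_idem (R : pzRingType) (e : R) : Prop := e * e = e.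

Definition out_neighbour (R : pzRingType) (f g : R) : Prop :=
  is_idem f /\ is_idem g /\ f * g = 0.

(* e ~_o e' : same set of out-neighbours in gamma(R) *)
Definition same_out (R : pzRingType) (e e' : R) : Prop :=
  forall f : R, is_idem f -> (e * f = 0 <-> e' * f = 0).

Definition inverse_pair (R : pzRingType) (w w' : R) : Prop :=
  w * w' = 1 /\ w' * w = 1.

From mathcomp Require Import all_boot all_algebra.
Local Open Scope ring_scope.
Import GRing.Theory.

(* Testing e1 ~_o e2 against the idempotent 1 - e1 (resp. 1 - e2) gives
   e2 e1 = e2 and e1 e2 = e1.  Then a := e2 - e1 satisfies a^2 = 0, so 1 + a
   is a unit with inverse 1 - a, and (1 + a) e1 (1 - a) = e1 + a = e2. *)

Section IdempotentConjugation.

Variable R : pzRingType.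

Lemma idem_subr1 (e : R) : is_idem e -> is_idem (1 - e).
Proof. by rewrite /is_idem => ee; rewrite mulrBl mul1r mulrBr mulr1 ee subrr subr0. Qed.

Lemma idem_mulr_subr1 (e : R) : is_idem e -> e * (1 - e) = 0.
Proof. by rewrite /is_idem => ee; rewrite mulrBr mulr1 ee subrr. Qed.

Lemma same_out_mulr_idem (e e' : R) : is_idem e -> same_out e e' -> e' * e = e'.
Proof.
move=> ee eqo; have /(eqo _ (idem_subr1 _ ee)) : e * (1 - e) = 0.
  exact: idem_mulr_subr1.
by rewrite mulrBr mulr1 => /eqP; rewrite subr_eq0 => /eqP <-.
Qed.

Lemma inverse_pair_sqr0 (a : R) : a * a = 0 -> inverse_pair (1 + a) (1 - a).
Proof.
move=> aa; split.
- by rewrite mulrBr mulr1 mulrDl mul1r aa addr0 addrK.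
- by rewrite mulrDr mulr1 mulrBl mul1r aa subr0 subrK.
Qed.

Section Absorbing.

Variables e1 e2 : R.
Hypotheses (idem1 : is_idem e1) (idem2 : is_idem e2).
Hypotheses (e12 : e1 * e2 = e1) (e21 : e2 * e1 = e2).

Lemma absorbing_idem_sqr0 : (e2 - e1) * (e2 - e1) = 0.
Proof. by rewrite mulrBr !mulrBl idem1 idem2 e12 e21 subrr. Qed.

Lemma absorbing_idem_conj : (1 + (e2 - e1)) * e1 * (1 - (e2 - e1)) = e2.
Proof.
have -> : (1 + (e2 - e1)) * e1 = e2.
  by rewrite mulrDl mul1r mulrBl e21 idem1 addrC subrK.
by rewrite mulrBr mulr1 mulrBr idem2 e21 subrr subr0.
Qed.

End Absorbing.

End IdempotentConjugation.

Theorem theorem5 (R : pzRingType) (e1 e2 : R) :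
  is_idem e1 -> is_idem e2 -> same_out e1 e2 ->
  exists w w' : R, inverse_pair w w' /\ w * e1 * w' = e2.
Proof.
move=> idem1 idem2 eqo.
have e21 : e2 * e1 = e2 by exact: same_out_mulr_idem.
have e12 : e1 * e2 = e1.
  by apply: same_out_mulr_idem => // f idf; exact: iff_sym (eqo f idf).
exists (1 + (e2 - e1)), (1 - (e2 - e1)); split.
- exact/inverse_pair_sqr0/absorbing_idem_sqr0.
- exact: absorbing_idem_conj.
Qed.
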